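(* In the category $\mathbf{Lens}$, the classes of all monomorphisms, effective monomorphisms, regular monomorphisms, strong monomorphisms and extremal monomorphisms coincide.
   Context: A lens $F\colon \mathbf{A}\to\mathbf{B}$ between small categories consists of a functor $F\colon\mathbf{A}\to\mathbf{B}$ (the get functor) together with, for each object $A$ of $\mathbf{A}$, a function $\varphi_{F,A}$ from the set of morphisms of $\mathbf{B}$ with domain $FA$ to the set of morphisms of $\mathbf{A}$ with domain $A$, such that: $F(\varphi_{F,A}b)=b$; $\varphi_{F,A}(\mathrm{id}_{FA})=\mathrm{id}_A$; and $\varphi_{F,A}(b'\circ b)=\varphi_{F,A'}(b')\circ\varphi_{F,A}(b)$ whenever $b$ has domain $FA$, $A'$ is the codomain of $\varphi_{F,A}b$, and $b'$ has domain $FA'$. $\mathbf{Lens}$ is the category of small categories and lenses, with composite of $F\colon\mathbf{A}\to\mathbf{B}$, $G\colon\mathbf{B}\to\mathbf{C}$ having get functor $G\circ F$ and puts $\varphi_{G\circ F,A}(c)=\varphi_{F,A}(\varphi_{G,FA}(c))$. An effective monomorphism is one that is an equaliser of its cokernel pair. *)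

(** Small categories, single-sorted presentation: a type of objects, a type of
    morphisms, domain/codomain maps, identities and a composition [comp g f]
    (= g o f) which is only constrained on composable pairs ([cod f = dom g]). *)
Record Cat := {
  Ob : Type;
  Mor : Type;
  dom : Mor -> Ob;
  cod : Mor -> Ob;
  idm : Ob -> Mor;
  comp : Mor -> Mor -> Mor;
  dom_idm : forall x, dom (idm x) = x;
  cod_idm : forall x, cod (idm x) = x;
  dom_comp : forall f g, cod f = dom g -> dom (comp g f) = dom f;
  cod_comp : forall f g, cod f = dom g -> cod (comp g f) = cod g;
  comp_idl : forall f, comp (idm (cod f)) f = f;
  comp_idr : forall f, comp f (idm (dom f)) = f;
  comp_assoc : forall f g h, cod f = dom g -> cod g = dom h ->
      comp h (comp g f) = comp (comp h g) f
}.

Arguments dom {c} _.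
Arguments cod {c} _.
Arguments idm {c} _.
Arguments comp {c} _ _.

Definition MorFrom (C : Cat) (x : Ob C) : Type := { f : Mor C | dom f = x }.

(** Data of a lens A -> B: get functor (on objects and morphisms) and puts
    phi_{F,a} : {b | dom b = F a} -> {f | dom f = a}. *)
Record LensData (A B : Cat) := {
  lob : Ob A -> Ob B;
  lmor : Mor A -> Mor B;
  lput : forall a : Ob A, MorFrom B (lob a) -> MorFrom A a
}.

Arguments lob {A B} _ _.
Arguments lmor {A B} _ _.
Arguments lput {A B} _ _ _.

Definition is_lens {A B : Cat} (F : LensData A B) : Prop :=
  (forall f, dom (lmor F f) = lob F (dom f)) /\
  (forall f, cod (lmor F f) = lob F (cod f)) /\
  (forall x, lmor F (idm x) = idm (lob F x)) /\
  (forall f g, cod f = dom g -> lmor F (comp g f) = comp (lmor F g) (lmor F f)) /\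
  (forall a (b : MorFrom B (lob F a)), lmor F (proj1_sig (lput F a b)) = proj1_sig b) /\
  (forall a (h : dom (idm (lob F a)) = lob F a),
      proj1_sig (lput F a (exist _ (idm (lob F a)) h)) = idm a) /\
  (forall a (b : MorFrom B (lob F a)) (b' : Mor B)
          (h' : dom b' = lob F (cod (proj1_sig (lput F a b))))
          (h : dom (comp b' (proj1_sig b)) = lob F a),
      proj1_sig (lput F a (exist _ (comp b' (proj1_sig b)) h)) =
      comp (proj1_sig (lput F (cod (proj1_sig (lput F a b))) (exist _ b' h')))
           (proj1_sig (lput F a b))).

(** Morphisms of Lens from A to B are the lens data satisfying [is_lens]. *)

Definition lcomp {A B C : Cat} (G : LensData B C) (F : LensData A B) : LensData A C :=
  {| lob := fun a => lob G (lob F a);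
     lmor := fun f => lmor G (lmor F f);
     lput := fun a c => lput F a (lput G (lob F a) c) |}.

Definition lid (A : Cat) : LensData A A :=
  {| lob := fun a => a; lmor := fun f => f; lput := fun a b => b |}.

Definition Mono {A B : Cat} (m : LensData A B) : Prop :=
  forall (C : Cat) (f g : LensData C A), is_lens f -> is_lens g ->
    lcomp m f = lcomp m g -> f = g.

Definition Epi {A B : Cat} (e : LensData A B) : Prop :=
  forall (C : Cat) (f g : LensData B C), is_lens f -> is_lens g ->
    lcomp f e = lcomp g e -> f = g.

Definition Iso {A B : Cat} (e : LensData A B) : Prop :=
  exists g : LensData B A, is_lens g /\ lcomp g e = lid A /\ lcomp e g = lid B.

Definition IsEqualiser {E B C : Cat} (m : LensData E B) (f g : LensData B C) : Prop :=
  is_lens m /\ lcomp f m = lcomp g m /\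
  forall (X : Cat) (h : LensData X B), is_lens h -> lcomp f h = lcomp g h ->
    exists! k : LensData X E, is_lens k /\ lcomp m k = h.

Definition IsPushout {A B C P : Cat} (f : LensData A B) (g : LensData A C)
    (i : LensData B P) (j : LensData C P) : Prop :=
  is_lens i /\ is_lens j /\ lcomp i f = lcomp j g /\
  forall (Q : Cat) (u : LensData B Q) (v : LensData C Q), is_lens u -> is_lens v ->
    lcomp u f = lcomp v g ->
    exists! k : LensData P Q, is_lens k /\ lcomp k i = u /\ lcomp k j = v.

Definition EffectiveMono {A B : Cat} (m : LensData A B) : Prop :=
  exists (P : Cat) (i j : LensData B P), IsPushout m m i j /\ IsEqualiser m i j.

Definition RegularMono {A B : Cat} (m : LensData A B) : Prop :=
  exists (C : Cat) (f g : LensData B C), is_lens f /\ is_lens g /\ IsEqualiser m f g.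

Definition StrongMono {A B : Cat} (m : LensData A B) : Prop :=
  Mono m /\
  forall (X Y : Cat) (e : LensData X Y) (u : LensData X A) (v : LensData Y B),
    is_lens e -> Epi e -> is_lens u -> is_lens v ->
    lcomp m u = lcomp v e ->
    exists d : LensData Y A, is_lens d /\ lcomp d e = u /\ lcomp m d = v.

Definition ExtremalMono {A B : Cat} (m : LensData A B) : Prop :=
  Mono m /\
  forall (X : Cat) (e : LensData A X) (g : LensData X B),
    is_lens e -> is_lens g -> lcomp g e = m -> Epi e -> Iso e.

From Stdlib Require Import ClassicalEpsilon ProofIrrelevance FunctionalExtensionality Bool.

(* Effective => regular => strong => extremal => mono holds in any category, so
   the content is that a monic lens m : A -> B is effective.  Testing m against
   the two projections of its kernel pair (which are lenses, since puts can be
   lifted along a pullback) shows that m is injective on objects and that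
   put_{dom w} (m w) = w for every morphism w of A.  The cokernel pair of m is B
   glued to a second copy of itself along the image of m, a set of objects
   closed under codomains because puts lift morphisms.  A lens h into B that
   equalises the two injections lands in this image, and the two properties
   above let it factor uniquely through m: objects are lifted along the
   injective object map of m and morphisms with the puts of m. *)

Local Notation "x .1" := (fst (proj1_sig x)) (at level 1, left associativity, format "x .1").
Local Notation "x .2" := (snd (proj1_sig x)) (at level 1, left associativity, format "x .2").

(** * Lenses *)

Lemma sig_eq {T : Type} {P : T -> Prop} (x y : {t | P t}) :
  proj1_sig x = proj1_sig y -> x = y.
Proof. apply eq_sig_hprop; intros; apply proof_irrelevance. Qed.

(* [lput] with the domain proof erased; junk value [idm a] unless [dom c = lob F a]. *)
Definition put {A B : Cat} (F : LensData A B) (a : Ob A) (c : Mor B) : Mor A :=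
  match excluded_middle_informative (dom c = lob F a) with
  | left h => proj1_sig (lput F a (exist _ c h))
  | right _ => idm a
  end.

Lemma put_lput {A B : Cat} (F : LensData A B) a (c : MorFrom B (lob F a)) :
  put F a (proj1_sig c) = proj1_sig (lput F a c).
Proof.
  destruct c as [c hc]; unfold put; simpl.
  destruct (excluded_middle_informative (dom c = lob F a)) as [h|]; [|contradiction].
  do 3 f_equal; apply proof_irrelevance.
Qed.

Lemma put_eq {A B : Cat} (F : LensData A B) a c (h : dom c = lob F a) :
  put F a c = proj1_sig (lput F a (exist _ c h)).
Proof. exact (put_lput F a (exist _ c h)). Qed.

Lemma put_dom {A B : Cat} (F : LensData A B) a c :
  dom c = lob F a -> dom (put F a c) = a.
Proof. intros h. rewrite (put_eq F a c h). exact (proj2_sig (lput F a (exist _ c h))). Qed.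

Section LensLaws.
Context {A B : Cat} {F : LensData A B}.
Hypothesis HF : is_lens F.

Lemma get_dom f : dom (lmor F f) = lob F (dom f).
Proof. apply HF. Qed.

Lemma get_cod f : cod (lmor F f) = lob F (cod f).
Proof. apply HF. Qed.

Lemma get_id x : lmor F (idm x) = idm (lob F x).
Proof. apply HF. Qed.

Lemma get_comp f g : cod f = dom g -> lmor F (comp g f) = comp (lmor F g) (lmor F f).
Proof. apply HF. Qed.

Lemma get_put a c : dom c = lob F a -> lmor F (put F a c) = c.
Proof. intros h. rewrite (put_eq F a c h). apply HF. Qed.

Lemma put_id a : put F a (idm (lob F a)) = idm a.
Proof. rewrite (put_eq F a _ (dom_idm _ _)). apply HF. Qed.

Lemma cod_put a c : dom c = lob F a -> cod c = lob F (cod (put F a c)).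
Proof. intros h. rewrite <- (get_put a c h) at 1. apply get_cod. Qed.

Lemma put_comp a b b' : dom b = lob F a -> dom b' = lob F (cod (put F a b)) ->
  put F a (comp b' b) = comp (put F (cod (put F a b)) b') (put F a b).
Proof.
  intros hb hb'.
  assert (h : dom (comp b' b) = lob F a).
  { rewrite dom_comp; [exact hb|]. rewrite hb'. apply cod_put, hb. }
  pose (bb := exist (fun f => dom f = lob F a) b hb).
  assert (h' : dom b' = lob F (cod (proj1_sig (lput F a bb))))
    by (rewrite <- put_lput; exact hb').
  destruct HF as (_ & _ & _ & _ & _ & _ & law).
  pose proof (law a bb b' h' h) as E; simpl in E.
  rewrite (put_eq F a _ h), E, <- (put_lput F _ (exist _ b' h')); simpl.
  rewrite <- (put_lput F a bb). reflexivity.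
Qed.

End LensLaws.

Lemma is_lens_intro {A B : Cat} (F : LensData A B) :
  (forall f, dom (lmor F f) = lob F (dom f)) ->
  (forall f, cod (lmor F f) = lob F (cod f)) ->
  (forall x, lmor F (idm x) = idm (lob F x)) ->
  (forall f g, cod f = dom g -> lmor F (comp g f) = comp (lmor F g) (lmor F f)) ->
  (forall a c, dom c = lob F a -> lmor F (put F a c) = c) ->
  (forall a, put F a (idm (lob F a)) = idm a) ->
  (forall a b b', dom b = lob F a -> dom b' = lob F (cod (put F a b)) ->
     put F a (comp b' b) = comp (put F (cod (put F a b)) b') (put F a b)) ->
  is_lens F.
Proof.
  intros hdom hcod hid hcomp hget hputid hputcomp.
  repeat split; auto.
  - intros a [b hb]. rewrite <- put_lput. apply hget, hb.
  - intros a h. rewrite <- put_lput. apply hputid.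
  - intros a [b hb] b' h' h.
    rewrite <- (put_lput F a (exist _ _ h)), <- (put_lput F _ (exist _ b' h')); simpl.
    rewrite <- (put_lput F a (exist _ b hb)) in *; simpl in *.
    apply hputcomp; assumption.
Qed.

Lemma lens_eq {A B : Cat} (F G : LensData A B) :
  (forall a, lob F a = lob G a) -> (forall f, lmor F f = lmor G f) ->
  (forall a c, dom c = lob F a -> put F a c = put G a c) -> F = G.
Proof.
  destruct F as [o m p], G as [o' m' p']; simpl. intros Ho Hm Hp.
  assert (o = o') as <- by (apply functional_extensionality; auto).
  assert (m = m') as <- by (apply functional_extensionality; auto).
  assert (p = p') as <-; [|reflexivity].
  apply functional_extensionality_dep; intro a. apply functional_extensionality; intro c.
  apply sig_eq.
  rewrite <- (put_lput {| lmor := m; lput := p |}), <- (put_lput {| lmor := m; lput := p' |}).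
  apply Hp, (proj2_sig c).
Qed.

Lemma lens_eq_inv {A B : Cat} (F G : LensData A B) : F = G ->
  (forall a, lob F a = lob G a) /\ (forall f, lmor F f = lmor G f) /\
  (forall a c, put F a c = put G a c).
Proof. intros <-; auto. Qed.

Lemma put_lcomp {A B C : Cat} (G : LensData B C) (F : LensData A B) a c :
  dom c = lob G (lob F a) -> put (lcomp G F) a c = put F a (put G (lob F a) c).
Proof.
  intros h. rewrite (put_eq (lcomp G F) a c h). simpl.
  rewrite <- put_lput. simpl. rewrite <- put_lput. reflexivity.
Qed.

Lemma lcomp_lens {A B C : Cat} (G : LensData B C) (F : LensData A B) :
  is_lens F -> is_lens G -> is_lens (lcomp G F).
Proof.
  intros HF HG. apply is_lens_intro; simpl.
  - intros f. rewrite (get_dom HG), (get_dom HF). reflexivity.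
  - intros f. rewrite (get_cod HG), (get_cod HF). reflexivity.
  - intros x. rewrite (get_id HF), (get_id HG). reflexivity.
  - intros f g h. rewrite (get_comp HF), (get_comp HG); [reflexivity| |exact h].
    rewrite (get_cod HF), (get_dom HF), h. reflexivity.
  - intros a c h. rewrite put_lcomp, (get_put HF); [apply (get_put HG)| |]; auto.
    apply put_dom, h.
  - intros a. rewrite put_lcomp by apply dom_idm. rewrite (put_id HG). apply (put_id HF).
  - intros a b b' hb hb'.
    rewrite put_lcomp in hb' by exact hb.
    set (y := put G (lob F a) b) in *.
    assert (hy : dom y = lob F a) by (apply put_dom, hb).
    assert (ecy := cod_put HF a y hy).
    assert (hb'' : dom b' = lob G (cod y)) by (rewrite ecy; exact hb').
    assert (hbb : dom (comp b' b) = lob G (lob F a))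
      by (rewrite dom_comp; [exact hb|]; rewrite hb''; apply (cod_put HG), hb).
    rewrite (put_lcomp G F a _ hbb), (put_lcomp G F a b hb); fold y.
    rewrite (put_lcomp G F _ b' hb'), (put_comp HG) by assumption; fold y.
    rewrite ecy.
    apply (put_comp HF); [exact hy|]. apply put_dom, hb'.
Qed.

Lemma lid_lens (A : Cat) : is_lens (lid A).
Proof.
  assert (put_lid : forall a c, dom c = a -> put (lid A) a c = c)
    by (intros a c h; rewrite (put_eq (lid A) a c h); reflexivity).
  apply is_lens_intro; simpl; auto.
  - intros a. apply put_lid, dom_idm.
  - intros a b b' hb hb'. rewrite put_lid in hb' by exact hb.
    rewrite (put_lid a b hb), (put_lid _ b' hb'), put_lid; [reflexivity|].
    rewrite dom_comp; [exact hb|]. rewrite hb'. reflexivity.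
Qed.

Lemma lcomp_lid_r {A B : Cat} (F : LensData A B) : lcomp F (lid A) = F.
Proof. destruct F; reflexivity. Qed.

Lemma lcomp_lid_l {A B : Cat} (F : LensData A B) : lcomp (lid B) F = F.
Proof. destruct F; reflexivity. Qed.

(** * Regular, strong and extremal monomorphisms *)

Lemma equaliser_mono {E B C : Cat} (m : LensData E B) (f g : LensData B C) :
  IsEqualiser m f g -> Mono m.
Proof.
  intros (Hm & Hfg & univ) X u v Hu Hv Huv.
  assert (Hmu : is_lens (lcomp m u)) by (apply lcomp_lens; assumption).
  assert (Emu : lcomp f (lcomp m u) = lcomp g (lcomp m u))
    by (change (lcomp (lcomp f m) u = lcomp (lcomp g m) u); rewrite Hfg; reflexivity).
  destruct (univ X (lcomp m u) Hmu Emu) as (k & _ & uniq).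
  transitivity k; [symmetry|]; apply uniq; auto.
Qed.

Lemma effective_regular {A B : Cat} (m : LensData A B) : EffectiveMono m -> RegularMono m.
Proof. intros (P & i & j & (Hi & Hj & _) & HE). exists P, i, j. auto. Qed.

Lemma regular_strong {A B : Cat} (m : LensData A B) : RegularMono m -> StrongMono m.
Proof.
  intros (C & f & g & Hf & Hg & HE).
  assert (Mm := equaliser_mono _ _ _ HE).
  destruct HE as (Hm & Hfg & univ).
  split; [exact Mm|].
  intros X Y e u v He Epe Hu Hv Hsq.
  assert (Efv : lcomp f v = lcomp g v).
  { apply Epe; try (apply lcomp_lens; assumption).
    change (lcomp f (lcomp v e) = lcomp g (lcomp v e)). rewrite <- Hsq.
    change (lcomp (lcomp f m) u = lcomp (lcomp g m) u). rewrite Hfg. reflexivity. }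
  destruct (univ Y v Hv Efv) as (d & (Hd & Hmd) & _).
  exists d. split; [exact Hd|]. split; [|exact Hmd].
  apply Mm; [apply lcomp_lens; assumption | exact Hu |].
  change (lcomp (lcomp m d) e = lcomp m u). rewrite Hmd. symmetry. exact Hsq.
Qed.

Lemma strong_extremal {A B : Cat} (m : LensData A B) : StrongMono m -> ExtremalMono m.
Proof.
  intros (Mm & fill). split; [exact Mm|].
  intros X e g He Hg Hge Epe.
  destruct (fill A X e (lid A) g He Epe (lid_lens A) Hg) as (d & Hd & Hde & Hgd).
  { rewrite lcomp_lid_r. symmetry. exact Hge. }
  exists d. split; [exact Hd|]. split; [exact Hde|].
  apply Epe; [apply lcomp_lens; assumption | apply lid_lens |].
  change (lcomp e (lcomp d e) = lcomp (lid X) e).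
  rewrite Hde, lcomp_lid_r, lcomp_lid_l. reflexivity.
Qed.

(** * Pullbacks and kernel pairs *)

Section Pullback.
Context {A1 A2 B : Cat} (f : LensData A1 B) (g : LensData A2 B).
Hypotheses (Hf : is_lens f) (Hg : is_lens g).

Definition pb_ob := {p : Ob A1 * Ob A2 | lob f (fst p) = lob g (snd p)}.
Definition pb_mor := {q : Mor A1 * Mor A2 | lmor f (fst q) = lmor g (snd q)}.

Lemma pb_dom_subproof (q : pb_mor) : lob f (dom q.1) = lob g (dom q.2).
Proof. rewrite <- (get_dom Hf), <- (get_dom Hg). f_equal. exact (proj2_sig q). Qed.

Lemma pb_cod_subproof (q : pb_mor) : lob f (cod q.1) = lob g (cod q.2).
Proof. rewrite <- (get_cod Hf), <- (get_cod Hg). f_equal. exact (proj2_sig q). Qed.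

Lemma pb_id_subproof (p : pb_ob) : lmor f (idm p.1) = lmor g (idm p.2).
Proof. rewrite (get_id Hf), (get_id Hg). f_equal. exact (proj2_sig p). Qed.

Definition pb_dom (q : pb_mor) : pb_ob := exist _ (dom q.1, dom q.2) (pb_dom_subproof q).
Definition pb_cod (q : pb_mor) : pb_ob := exist _ (cod q.1, cod q.2) (pb_cod_subproof q).
Definition pb_id (p : pb_ob) : pb_mor := exist _ (idm p.1, idm p.2) (pb_id_subproof p).

(* Componentwise composition; the junk value [q] is returned only for
   non-composable pairs, see [pb_comp_eq]. *)
Definition pb_comp (q' q : pb_mor) : pb_mor :=
  match excluded_middle_informative
          (lmor f (comp q'.1 q.1) = lmor g (comp q'.2 q.2)) with
  | left h => exist _ (comp q'.1 q.1, comp q'.2 q.2) h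
  | right _ => q
  end.

Lemma pb_composable (q q' : pb_mor) : pb_cod q = pb_dom q' ->
  cod q.1 = dom q'.1 /\ cod q.2 = dom q'.2.
Proof. intros e. apply (f_equal (@proj1_sig _ _)) in e. injection e. auto. Qed.

Lemma pb_comp_eq (q q' : pb_mor) : pb_cod q = pb_dom q' ->
  proj1_sig (pb_comp q' q) = (comp q'.1 q.1, comp q'.2 q.2).
Proof.
  intros e. destruct (pb_composable q q' e) as [e1 e2].
  unfold pb_comp. destruct excluded_middle_informative as [|n]; [reflexivity|].
  exfalso. apply n. rewrite (get_comp Hf), (get_comp Hg) by assumption.
  f_equal; [exact (proj2_sig q') | exact (proj2_sig q)].
Qed.

Definition pullback : Cat.
Proof.
  refine {| Ob := pb_ob; Mor := pb_mor; dom := pb_dom; cod := pb_cod;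
            idm := pb_id; comp := pb_comp |}.
  - intros [[x1 x2] hx]. apply sig_eq. simpl. rewrite !dom_idm. reflexivity.
  - intros [[x1 x2] hx]. apply sig_eq. simpl. rewrite !cod_idm. reflexivity.
  - intros q q' e. apply sig_eq. destruct (pb_composable q q' e).
    simpl. rewrite (pb_comp_eq q q' e). simpl. rewrite !dom_comp; auto.
  - intros q q' e. apply sig_eq. destruct (pb_composable q q' e).
    simpl. rewrite (pb_comp_eq q q' e). simpl. rewrite !cod_comp; auto.
  - intros q. apply sig_eq. rewrite pb_comp_eq.
    + simpl. rewrite !comp_idl. destruct q as [[]]; reflexivity.
    + apply sig_eq. simpl. rewrite !dom_idm. reflexivity.
  - intros q. apply sig_eq. rewrite pb_comp_eq.
    + simpl. rewrite !comp_idr. destruct q as [[]]; reflexivity.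
    + apply sig_eq. simpl. rewrite !cod_idm. reflexivity.
  - intros q q' q'' e e'. apply sig_eq.
    destruct (pb_composable q q' e), (pb_composable q' q'' e').
    assert (e1 : pb_cod (pb_comp q' q) = pb_dom q'').
    { apply sig_eq. simpl. rewrite (pb_comp_eq q q' e). simpl. rewrite !cod_comp by assumption.
      exact (f_equal (@proj1_sig _ _) e'). }
    assert (e2 : pb_cod q = pb_dom (pb_comp q'' q')).
    { apply sig_eq. simpl. rewrite (pb_comp_eq q' q'' e'). simpl. rewrite !dom_comp by assumption.
      exact (f_equal (@proj1_sig _ _) e). }
    rewrite (pb_comp_eq _ _ e1), (pb_comp_eq _ _ e2), (pb_comp_eq q q' e), (pb_comp_eq q' q'' e').
    simpl. rewrite !comp_assoc; auto.
Defined.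

Lemma pb_fst_lift_subproof (p : pb_ob) (c : MorFrom A1 p.1) :
  lmor f (proj1_sig c) = lmor g (put g p.2 (lmor f (proj1_sig c))).
Proof.
  rewrite (get_put Hg); [reflexivity|].
  rewrite (get_dom Hf), (proj2_sig c). exact (proj2_sig p).
Qed.

Definition pb_fst_lift (p : pb_ob) (c : MorFrom A1 p.1) : pb_mor :=
  exist _ (proj1_sig c, put g p.2 (lmor f (proj1_sig c))) (pb_fst_lift_subproof p c).

Lemma pb_fst_lift_dom p c : pb_dom (pb_fst_lift p c) = p.
Proof.
  destruct p as [[p1 p2] hp], c as [c hc]; simpl in *. apply sig_eq; simpl.
  rewrite hc. f_equal. apply put_dom. rewrite (get_dom Hf), hc. exact hp.
Qed.

Definition pb_fst : LensData pullback A1 :=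
  {| lob := fun p : Ob pullback => p.1;
     lmor := fun q : Mor pullback => q.1;
     lput := fun p c => exist _ (pb_fst_lift p c) (pb_fst_lift_dom p c) |}.

Lemma put_pb_fst (p : pb_ob) c : dom c = p.1 ->
  proj1_sig (put pb_fst p c) = (c, put g p.2 (lmor f c)).
Proof. intros h. rewrite (put_eq pb_fst p c h). reflexivity. Qed.

Lemma pb_fst_lens : is_lens pb_fst.
Proof.
  apply is_lens_intro; try reflexivity.
  - intros q q' e. simpl. rewrite (pb_comp_eq q q' e). reflexivity.
  - intros p c h. simpl. rewrite put_pb_fst by exact h. reflexivity.
  - intros [[p1 p2] hp]. apply sig_eq. rewrite put_pb_fst by apply dom_idm. simpl in *.
    rewrite (get_id Hf), hp, (put_id Hg). reflexivity.
  - intros p b b' hb hb'.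
    assert (e : pb_cod (put pb_fst p b) = pb_dom (put pb_fst (pb_cod (put pb_fst p b)) b'))
      by (symmetry; exact (put_dom pb_fst _ b' hb')).
    assert (hc : dom (comp b' b) = p.1).
    { rewrite dom_comp; [exact hb|].
      rewrite hb'. simpl. rewrite put_pb_fst by exact hb. reflexivity. }
    apply sig_eq. change (proj1_sig (put pb_fst p (comp b' b)) =
      proj1_sig (pb_comp (put pb_fst (pb_cod (put pb_fst p b)) b') (put pb_fst p b))).
    rewrite (pb_comp_eq _ _ e), (put_pb_fst p _ hc).
    rewrite (put_pb_fst (pb_cod (put pb_fst p b)) b' hb'), (put_pb_fst p b hb).
    simpl in hb' |- *. rewrite put_pb_fst in hb' |- * by exact hb. simpl in hb' |- *.
    destruct p as [[p1 p2] hp]; simpl in *.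
    assert (hfb : dom (lmor f b) = lob g p2) by (rewrite (get_dom Hf), hb; exact hp).
    rewrite (get_comp Hf) by (symmetry; exact hb').
    rewrite (put_comp Hg); [reflexivity | exact hfb |].
    rewrite (get_dom Hf), hb', <- (get_cod Hf). exact (cod_put Hg _ _ hfb).
Qed.

End Pullback.

Definition pb_flip_ob {A1 A2 B : Cat} {f : LensData A1 B} {g : LensData A2 B}
  (p : pb_ob f g) : pb_ob g f := exist _ (p.2, p.1) (eq_sym (proj2_sig p)).

Definition pb_flip_mor {A1 A2 B : Cat} {f : LensData A1 B} {g : LensData A2 B}
  (q : pb_mor f g) : pb_mor g f := exist _ (q.2, q.1) (eq_sym (proj2_sig q)).

Lemma pb_flip_morK {A1 A2 B : Cat} {f : LensData A1 B} {g : LensData A2 B}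
  (q : pb_mor f g) : pb_flip_mor (pb_flip_mor q) = q.
Proof. apply sig_eq. destruct q as [[]]; reflexivity. Qed.

Section PullbackSwap.
Context {A1 A2 B : Cat} (f : LensData A1 B) (g : LensData A2 B).
Hypotheses (Hf : is_lens f) (Hg : is_lens g).

Lemma pb_swap_lift_dom (p : pb_ob f g) (c : MorFrom (pullback g f Hg Hf) (pb_flip_ob p)) :
  pb_dom f g Hf Hg (pb_flip_mor (proj1_sig c)) = p.
Proof.
  destruct p as [[p1 p2] hp], c as [[[c2 c1] hc] e]; simpl in *.
  apply (f_equal (@proj1_sig _ _)) in e. injection e as e2 e1. apply sig_eq. simpl. congruence.
Qed.

Definition pb_swap : LensData (pullback f g Hf Hg) (pullback g f Hg Hf) :=
  Build_LensData (pullback f g Hf Hg) (pullback g f Hg Hf) pb_flip_ob pb_flip_mor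
    (fun p c => exist _ (pb_flip_mor (proj1_sig c)) (pb_swap_lift_dom p c)).

Lemma put_pb_swap p c : dom c = lob pb_swap p -> put pb_swap p c = pb_flip_mor c.
Proof. intros h. rewrite (put_eq pb_swap p c h). reflexivity. Qed.

Lemma pb_swap_lens : is_lens pb_swap.
Proof.
  apply is_lens_intro; try (intros; apply sig_eq; reflexivity).
  - intros q q' e. apply sig_eq. destruct (pb_composable f g Hf Hg q q' e).
    simpl. rewrite (pb_comp_eq f g Hf Hg q q' e), (pb_comp_eq g f Hg Hf); [reflexivity|].
    apply sig_eq. simpl. f_equal; assumption.
  - intros p c h. rewrite (put_pb_swap p c h). exact (pb_flip_morK c).
  - intros p. rewrite put_pb_swap by apply dom_idm. apply sig_eq. reflexivity.
  - intros p b b' hb hb'.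
    rewrite (put_pb_swap p b hb) in hb' |- *.
    assert (ebb : cod b = dom b')
      by (etransitivity; [|symmetry; exact hb']; apply sig_eq; reflexivity).
    assert (hc : dom (comp b' b) = lob pb_swap p)
      by (rewrite dom_comp; [exact hb | exact ebb]).
    rewrite (put_pb_swap p _ hc), (put_pb_swap _ b' hb').
    destruct (pb_composable g f Hg Hf b b' ebb) as [e1 e2].
    apply sig_eq. simpl.
    rewrite (pb_comp_eq g f Hg Hf b b' ebb), (pb_comp_eq f g Hf Hg); [reflexivity|].
    apply sig_eq. simpl. f_equal; assumption.
Qed.

Definition pb_snd : LensData (pullback f g Hf Hg) A2 := lcomp (pb_fst g f Hg Hf) pb_swap.

Lemma pb_snd_lens : is_lens pb_snd.
Proof. apply lcomp_lens; [exact pb_swap_lens | apply pb_fst_lens]. Qed.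

Lemma pullback_square : lcomp f (pb_fst f g Hf Hg) = lcomp g pb_snd.
Proof.
  apply lens_eq.
  - intros p. exact (proj2_sig p).
  - intros q. exact (proj2_sig q).
  - intros p c h.
    assert (hg : dom c = lob g (lob pb_snd p)) by (rewrite h; exact (proj2_sig p)).
    assert (hgp := put_dom g _ _ hg).
    rewrite (put_lcomp f _ p c h), (put_lcomp g _ p c hg).
    rewrite (put_lcomp _ pb_swap p _ hgp : put pb_snd p _ = _).
    rewrite (put_pb_swap p _ (put_dom (pb_fst g f Hg Hf) (lob pb_swap p) _ hgp)).
    apply sig_eq. rewrite (put_pb_fst f g Hf Hg p _ (put_dom f _ _ h)).
    cbn [pb_flip_mor proj1_sig]. rewrite (put_pb_fst g f Hg Hf _ _ hgp). simpl.
    rewrite (get_put Hf), (get_put Hg); [reflexivity | exact hg | exact h].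
Qed.

End PullbackSwap.

Section MonoLens.
Context {A B : Cat} (m : LensData A B).
Hypotheses (Hm : is_lens m) (Mm : Mono m).

Lemma mono_kernel_pair_eq : pb_fst m m Hm Hm = pb_snd m m Hm Hm.
Proof.
  apply Mm; [apply pb_fst_lens | apply pb_snd_lens | apply pullback_square].
Qed.

Lemma mono_lob_inj a1 a2 : lob m a1 = lob m a2 -> a1 = a2.
Proof.
  intros h.
  exact (f_equal (fun F : LensData (pullback m m Hm Hm) A => lob F (exist _ (a1, a2) h))
           mono_kernel_pair_eq).
Qed.

Lemma mono_put_get w : put m (dom w) (lmor m w) = w.
Proof.
  assert (h : lmor m w = lmor m (put m (dom w) (lmor m w)))
    by (rewrite (get_put Hm); [reflexivity | apply (get_dom Hm)]).
  symmetry.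
  exact (f_equal (fun F : LensData (pullback m m Hm Hm) A => lmor F (exist _ (w, _) h))
           mono_kernel_pair_eq).
Qed.

End MonoLens.

(** * Cokernel pairs *)

Section CokernelPair.
Context {A B : Cat} (m : LensData A B).
Hypothesis Hm : is_lens m.

Definition img (b : Ob B) : Prop := exists a, lob m a = b.

Definition imgb (b : Ob B) : bool :=
  if excluded_middle_informative (img b) then true else false.

Lemma imgb_true b : imgb b = true <-> img b.
Proof. unfold imgb. destruct excluded_middle_informative; split; auto; discriminate. Qed.

Lemma imgb_false b : imgb b = false <-> ~ img b.
Proof. unfold imgb. destruct excluded_middle_informative; split; auto; try discriminate; tauto. Qed.

Lemma img_lob a : img (lob m a).
Proof. exists a. reflexivity. Qed.

Lemma img_cod f : img (dom f) -> img (cod f).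
Proof.
  intros [a ha]. exists (cod (put m a f)). symmetry. apply (cod_put Hm). symmetry. exact ha.
Qed.

Lemma imgb_cod f : imgb (dom f) = true -> imgb (cod f) = true.
Proof. rewrite !imgb_true. apply img_cod. Qed.

Lemma orb_imgb (t : bool) b : (img b -> t = true) -> t || imgb b = t.
Proof.
  intros h. destruct (imgb b) eqn:E; [|apply orb_false_r].
  apply imgb_true in E. rewrite (h E). reflexivity.
Qed.

(* Two copies of B glued along the image of m: [(b, true)] lies in the first
   copy, [(b, false)] in the second and only exists off the image.  The image
   is closed under codomains ([img_cod]), so a morphism of the second copy may
   enter the glued part; its codomain flag is recomputed by [cp_cod]. *)
Definition cp_ob := {p : Ob B * bool | img (fst p) -> snd p = true}.
Definition cp_mor := {q : Mor B * bool | img (dom (fst q)) -> snd q = true}.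

Definition cp_dom (q : cp_mor) : cp_ob :=
  exist (fun p : Ob B * bool => img (fst p) -> snd p = true) (dom q.1, q.2) (proj2_sig q).

Lemma cp_cod_subproof (q : cp_mor) : img (cod q.1) -> q.2 || imgb (cod q.1) = true.
Proof. intros h. apply imgb_true in h. rewrite h. apply orb_true_r. Qed.

Definition cp_cod (q : cp_mor) : cp_ob :=
  exist (fun p : Ob B * bool => img (fst p) -> snd p = true)
    (cod q.1, q.2 || imgb (cod q.1)) (cp_cod_subproof q).

Lemma cp_cod_val q : proj1_sig (cp_cod q) = (cod q.1, q.2 || imgb (cod q.1)).
Proof. reflexivity. Qed.

Lemma cp_id_subproof (p : cp_ob) : img (dom (idm p.1)) -> p.2 = true.
Proof. rewrite dom_idm. exact (proj2_sig p). Qed.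

Definition cp_id (p : cp_ob) : cp_mor :=
  exist (fun q : Mor B * bool => img (dom (fst q)) -> snd q = true)
    (idm p.1, p.2) (cp_id_subproof p).

Lemma cp_comp_subproof (q' q : cp_mor) :
  img (dom (comp q'.1 q.1)) -> q.2 || imgb (dom (comp q'.1 q.1)) = true.
Proof. intros h. apply imgb_true in h. rewrite h. apply orb_true_r. Qed.

(* The flag [q.2 || imgb _] satisfies the side condition even for
   non-composable pairs; for composable ones it is [q.2] ([cp_comp_eq]). *)
Definition cp_comp (q' q : cp_mor) : cp_mor :=
  exist (fun q : Mor B * bool => img (dom (fst q)) -> snd q = true)
    (comp q'.1 q.1, q.2 || imgb (dom (comp q'.1 q.1))) (cp_comp_subproof q' q).

Lemma cp_composable (q q' : cp_mor) : cp_cod q = cp_dom q' ->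
  cod q.1 = dom q'.1 /\ q.2 || imgb (cod q.1) = q'.2.
Proof. intros e. apply (f_equal (@proj1_sig _ _)) in e. injection e. auto. Qed.

Lemma cp_comp_eq (q q' : cp_mor) : cp_cod q = cp_dom q' ->
  proj1_sig (cp_comp q' q) = (comp q'.1 q.1, q.2).
Proof.
  intros e. destruct (cp_composable q q' e) as [e1 e2]. simpl.
  rewrite dom_comp by exact e1. f_equal. apply orb_imgb, (proj2_sig q).
Qed.

Lemma orb_imgb_dom_cod f : imgb (dom f) || imgb (cod f) = imgb (cod f).
Proof. destruct (imgb (dom f)) eqn:E; [rewrite (imgb_cod f E) |]; reflexivity. Qed.

Definition cokernel_pair : Cat.
Proof.
  refine {| Ob := cp_ob; Mor := cp_mor; dom := cp_dom; cod := cp_cod;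
            idm := cp_id; comp := cp_comp |}.
  - intros [[b t] h]. apply sig_eq. simpl. rewrite dom_idm. reflexivity.
  - intros [[b t] h]. apply sig_eq. simpl. rewrite cod_idm, orb_imgb; [reflexivity | exact h].
  - intros q q' e. apply sig_eq. destruct (cp_composable q q' e) as [e1 e2].
    simpl. rewrite dom_comp; [|exact e1]. f_equal. apply orb_imgb, (proj2_sig q).
  - intros q q' e. apply sig_eq. destruct (cp_composable q q' e) as [e1 e2].
    rewrite !cp_cod_val, (cp_comp_eq q q' e). simpl. rewrite cod_comp by exact e1.
    rewrite <- e2, e1, <- orb_assoc, orb_imgb_dom_cod. reflexivity.
  - intros q. apply sig_eq. rewrite cp_comp_eq.
    + simpl. rewrite comp_idl. destruct q as [[]]; reflexivity.
    + apply sig_eq. simpl. rewrite dom_idm. reflexivity.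
  - intros q. apply sig_eq. rewrite cp_comp_eq.
    + simpl. rewrite comp_idr. destruct q as [[]]; reflexivity.
    + apply sig_eq. simpl. rewrite cod_idm, orb_imgb; [reflexivity | exact (proj2_sig q)].
  - intros q q' q'' e e'. apply sig_eq.
    destruct (cp_composable q q' e) as [e1 e2], (cp_composable q' q'' e') as [e1' e2'].
    assert (e3 : cp_cod (cp_comp q' q) = cp_dom q'').
    { apply sig_eq. rewrite cp_cod_val, (cp_comp_eq q q' e). simpl.
      rewrite cod_comp by exact e1.
      rewrite <- e2', <- e2, e1, <- orb_assoc, orb_imgb_dom_cod, e1'. reflexivity. }
    assert (e4 : cp_cod q = cp_dom (cp_comp q'' q')).
    { rewrite e. apply sig_eq.
      change (proj1_sig (cp_dom q') = proj1_sig (cp_dom (cp_comp q'' q'))).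
      unfold cp_dom at 2. cbn [proj1_sig]. rewrite (cp_comp_eq q' q'' e'). simpl.
      rewrite dom_comp by exact e1'. reflexivity. }
    rewrite (cp_comp_eq _ _ e3), (cp_comp_eq _ _ e4), (cp_comp_eq q q' e), (cp_comp_eq q' q'' e').
    simpl. rewrite comp_assoc; auto.
Defined.

End CokernelPair.

Section Injections.
Context {A B : Cat} (m : LensData A B).
Hypothesis Hm : is_lens m.
Local Notation P := (cokernel_pair m Hm).

Definition inl_ob (b : Ob B) : Ob P :=
  exist (fun p : Ob B * bool => img m (fst p) -> snd p = true) (b, true) (fun _ => eq_refl).
Definition inl_mor (f : Mor B) : Mor P :=
  exist (fun q : Mor B * bool => img m (dom (fst q)) -> snd q = true) (f, true) (fun _ => eq_refl).
Definition inr_ob (b : Ob B) : Ob P :=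
  exist (fun p : Ob B * bool => img m (fst p) -> snd p = true)
    (b, imgb m b) (proj2 (imgb_true m b)).
Definition inr_mor (f : Mor B) : Mor P :=
  exist (fun q : Mor B * bool => img m (dom (fst q)) -> snd q = true)
    (f, imgb m (dom f)) (proj2 (imgb_true m (dom f))).

Lemma dom_cp_fst (q : Mor P) p : dom q = p -> dom q.1 = p.1.
Proof. intros <-. reflexivity. Qed.

Lemma dom_cp_snd (q : Mor P) p : dom q = p -> q.2 = p.2.
Proof. intros <-. reflexivity. Qed.

Definition cp_inl : LensData B P :=
  {| lob := inl_ob; lmor := inl_mor;
     lput := fun b c => exist _ (proj1_sig c).1 (dom_cp_fst _ _ (proj2_sig c)) |}.

Definition cp_inr : LensData B P :=
  {| lob := inr_ob; lmor := inr_mor;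
     lput := fun b c => exist _ (proj1_sig c).1 (dom_cp_fst _ _ (proj2_sig c)) |}.

Lemma put_cp_inl b c : dom c = lob cp_inl b -> put cp_inl b c = c.1.
Proof. intros h. rewrite (put_eq cp_inl b c h). reflexivity. Qed.

Lemma put_cp_inr b c : dom c = lob cp_inr b -> put cp_inr b c = c.1.
Proof. intros h. rewrite (put_eq cp_inr b c h). reflexivity. Qed.

Lemma cp_inl_lens : is_lens cp_inl.
Proof.
  apply is_lens_intro; try (intros; apply sig_eq; reflexivity).
  - intros b c h. rewrite put_cp_inl by exact h. apply sig_eq. simpl.
    destruct c as [[c t] hc]; simpl. f_equal. symmetry. exact (dom_cp_snd _ _ h).
  - intros b. rewrite put_cp_inl by apply dom_idm. reflexivity.
  - intros b c c' hc hc'. rewrite !put_cp_inl; [reflexivity | exact hc | exact hc' |].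
    rewrite (dom_comp P); [exact hc|]. rewrite hc', put_cp_inl by exact hc.
    apply sig_eq. simpl. rewrite (dom_cp_snd _ _ hc). reflexivity.
Qed.

Lemma cp_inr_lens : is_lens cp_inr.
Proof.
  apply is_lens_intro.
  - intros f. apply sig_eq. reflexivity.
  - intros f. apply sig_eq. simpl. rewrite (orb_imgb_dom_cod m Hm f). reflexivity.
  - intros x. apply sig_eq. simpl. rewrite dom_idm. reflexivity.
  - intros f g e. apply sig_eq. simpl. rewrite dom_comp by exact e. rewrite orb_diag. reflexivity.
  - intros b c h. rewrite put_cp_inr by exact h. apply sig_eq. simpl.
    assert (h1 := dom_cp_fst _ _ h). assert (h2 := dom_cp_snd _ _ h).
    destruct c as [[c t] hc]; simpl in *. rewrite h1, h2. reflexivity.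
  - intros b. rewrite put_cp_inr by apply dom_idm. reflexivity.
  - intros b c c' hc hc'. rewrite !put_cp_inr; [reflexivity | exact hc | exact hc' |].
    rewrite (dom_comp P); [exact hc|]. rewrite hc', put_cp_inr by exact hc.
    apply sig_eq. simpl. rewrite (dom_cp_snd _ _ hc). simpl.
    assert (hc1 : dom c.1 = b) by exact (dom_cp_fst _ _ hc).
    rewrite <- hc1, (orb_imgb_dom_cod m Hm). reflexivity.
Qed.

Lemma cp_ob_cases (p : Ob P) : p = lob cp_inl p.1 \/ p = lob cp_inr p.1.
Proof.
  destruct p as [[b []] hp]; [left | right]; apply sig_eq; simpl; [reflexivity|].
  f_equal. symmetry. apply imgb_false. intros hb. discriminate (hp hb).
Qed.

Lemma cp_mor_inl (q : Mor P) : q.2 = true -> q = lmor cp_inl q.1.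
Proof. destruct q as [[f t] hq]; simpl. intros ->. apply sig_eq. reflexivity. Qed.

Lemma cp_mor_inr (q : Mor P) : q.2 = imgb m (dom q.1) -> q = lmor cp_inr q.1.
Proof. destruct q as [[f t] hq]; simpl. intros ->. apply sig_eq. reflexivity. Qed.

Lemma cp_mor_cases (q : Mor P) : q = lmor cp_inl q.1 \/ q = lmor cp_inr q.1.
Proof.
  destruct q.2 eqn:E; [left; apply cp_mor_inl, E | right; apply cp_mor_inr].
  rewrite E. symmetry. apply imgb_false.
  intros hq. discriminate (eq_trans (eq_sym E) (proj2_sig q hq)).
Qed.

Lemma put_from_inl {Q : Cat} (k : LensData P Q) b c : dom c = lob k (lob cp_inl b) ->
  put k (lob cp_inl b) c = lmor cp_inl (put (lcomp k cp_inl) b c).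
Proof.
  intros h. assert (hd := put_dom k _ _ h).
  rewrite (put_lcomp k cp_inl b c h), put_cp_inl by exact hd.
  apply cp_mor_inl. exact (dom_cp_snd _ _ hd).
Qed.

Lemma put_from_inr {Q : Cat} (k : LensData P Q) b c : dom c = lob k (lob cp_inr b) ->
  put k (lob cp_inr b) c = lmor cp_inr (put (lcomp k cp_inr) b c).
Proof.
  intros h. assert (hd := put_dom k _ _ h).
  rewrite (put_lcomp k cp_inr b c h), put_cp_inr by exact hd.
  apply cp_mor_inr. rewrite (dom_cp_fst _ _ hd). exact (dom_cp_snd _ _ hd).
Qed.

Lemma cp_lens_ext {Q : Cat} (k1 k2 : LensData P Q) :
  lcomp k1 cp_inl = lcomp k2 cp_inl -> lcomp k1 cp_inr = lcomp k2 cp_inr -> k1 = k2.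
Proof.
  intros El Er.
  destruct (lens_eq_inv _ _ El) as (El_ob & El_mor & El_put).
  destruct (lens_eq_inv _ _ Er) as (Er_ob & Er_mor & Er_put).
  assert (Hob : forall p, lob k1 p = lob k2 p)
    by (intros p; destruct (cp_ob_cases p) as [E|E]; rewrite E; [apply El_ob | apply Er_ob]).
  apply lens_eq; [exact Hob | |].
  - intros q. destruct (cp_mor_cases q) as [E|E]; rewrite E; [apply El_mor | apply Er_mor].
  - intros p c h. assert (h2 : dom c = lob k2 p) by (rewrite h; apply Hob).
    destruct (cp_ob_cases p) as [E|E]; rewrite E in h, h2 |- *.
    + rewrite (put_from_inl k1 _ c h), (put_from_inl k2 _ c h2), El_put. reflexivity.
    + rewrite (put_from_inr k1 _ c h), (put_from_inr k2 _ c h2), Er_put. reflexivity.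
Qed.

Lemma cp_square : lcomp cp_inl m = lcomp cp_inr m.
Proof.
  assert (himg : forall a, true = imgb m (lob m a))
    by (intros a; symmetry; apply imgb_true, img_lob).
  apply lens_eq.
  - intros a. apply sig_eq. simpl. rewrite <- himg. reflexivity.
  - intros f. apply sig_eq. simpl. rewrite (get_dom Hm), <- himg. reflexivity.
  - intros a c h.
    assert (h' : dom c = lob cp_inr (lob m a))
      by (rewrite h; apply sig_eq; simpl; rewrite <- himg; reflexivity).
    rewrite (put_lcomp cp_inl m a c h), (put_lcomp cp_inr m a c h').
    rewrite put_cp_inl, put_cp_inr by assumption.
    reflexivity.
Qed.

End Injections.

Section Copair.
Context {A B Q : Cat} (m : LensData A B) (u v : LensData B Q).
Hypotheses (Hm : is_lens m) (Hu : is_lens u) (Hv : is_lens v) (Huv : lcomp u m = lcomp v m).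
Local Notation P := (cokernel_pair m Hm).

Lemma lob_uv b : img m b -> lob u b = lob v b.
Proof. intros [a <-]. apply (lens_eq_inv _ _ Huv). Qed.

Lemma lmor_uv f : img m (dom f) -> lmor u f = lmor v f.
Proof.
  intros [a ha]. rewrite <- (get_put Hm a f) by (symmetry; exact ha).
  apply (lens_eq_inv _ _ Huv).
Qed.

Lemma put_uv b c : img m b -> dom c = lob u b -> put u b c = put v b c.
Proof.
  intros [a <-] h.
  assert (h' : dom c = lob v (lob m a)) by (rewrite h; apply lob_uv, img_lob).
  assert (E := proj2 (proj2 (lens_eq_inv _ _ Huv)) a c).
  rewrite (put_lcomp u m a c h), (put_lcomp v m a c h') in E.
  apply (f_equal (lmor m)) in E. rewrite !(get_put Hm) in E; [exact E | |];
  apply put_dom; assumption.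
Qed.

Definition copair_ob (p : Ob P) : Ob Q := if p.2 then lob u p.1 else lob v p.1.
Definition copair_mor (q : Mor P) : Mor Q := if q.2 then lmor u q.1 else lmor v q.1.
Definition copair_put (p : Ob P) (c : Mor Q) : Mor B :=
  if p.2 then put u p.1 c else put v p.1 c.

Lemma copair_put_dom p c : dom c = copair_ob p -> dom (copair_put p c) = p.1.
Proof. unfold copair_ob, copair_put. destruct p.2; apply put_dom. Qed.

Lemma copair_lift_subproof (p : Ob P) (c : MorFrom Q (copair_ob p)) :
  img m (dom (copair_put p (proj1_sig c))) -> p.2 = true.
Proof. rewrite copair_put_dom by exact (proj2_sig c). exact (proj2_sig p). Qed.

Definition copair_lift (p : Ob P) (c : MorFrom Q (copair_ob p)) : Mor P :=
  exist (fun q : Mor B * bool => img m (dom (fst q)) -> snd q = true)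
    (copair_put p (proj1_sig c), p.2) (copair_lift_subproof p c).

Lemma copair_lift_dom p c : dom (copair_lift p c) = p.
Proof.
  apply sig_eq. simpl. rewrite copair_put_dom by exact (proj2_sig c).
  destruct p as [[]]; reflexivity.
Qed.

Definition cp_copair : LensData P Q :=
  {| lob := copair_ob; lmor := copair_mor;
     lput := fun p c => exist _ (copair_lift p c) (copair_lift_dom p c) |}.

Lemma put_cp_copair p c : dom c = copair_ob p ->
  proj1_sig (put cp_copair p c) = (copair_put p c, p.2).
Proof. intros h. rewrite (put_eq cp_copair p c h). reflexivity. Qed.

Lemma copair_mor_comp (q q' : Mor P) : cod q = dom q' ->
  copair_mor (comp q' q) = comp (copair_mor q') (copair_mor q).
Proof.
  intros e. destruct (cp_composable m q q' e) as [e1 e2].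
  unfold copair_mor at 1. change (comp q' q) with (cp_comp m q' q).
  rewrite (cp_comp_eq m q q' e). simpl. unfold copair_mor. rewrite <- e2.
  destruct q as [[f []] hf]; simpl in *.
  - apply (get_comp Hu), e1.
  - rewrite (get_comp Hv) by exact e1. destruct (imgb m (cod f)) eqn:E; [|reflexivity].
    f_equal. symmetry. apply lmor_uv. rewrite <- e1. apply imgb_true, E.
Qed.

Lemma copair_ob_cod (q : Mor P) :
  copair_ob (cod q) = if q.2 || imgb m (cod q.1) then lob u (cod q.1) else lob v (cod q.1).
Proof. reflexivity. Qed.

Lemma copair_put_cod (q : Mor P) c : copair_put (cod q) c =
  if q.2 || imgb m (cod q.1) then put u (cod q.1) c else put v (cod q.1) c.
Proof. reflexivity. Qed.

Lemma cod_copair_put p b : dom b = copair_ob p ->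
  cod b = copair_ob (cod (put cp_copair p b)).
Proof.
  intros h. rewrite copair_ob_cod, (put_cp_copair p b h). simpl. unfold copair_put.
  destruct p as [[b0 []] hp]; unfold copair_ob in h; simpl in *.
  - apply (cod_put Hu), h.
  - rewrite (cod_put Hv b0 b h). destruct (imgb m _) eqn:E; [|reflexivity].
    symmetry. apply lob_uv, imgb_true, E.
Qed.

Lemma copair_put_comp p b b' : dom b = copair_ob p ->
  dom b' = copair_ob (cod (put cp_copair p b)) ->
  copair_put p (comp b' b) =
  comp (copair_put (cod (put cp_copair p b)) b') (copair_put p b).
Proof.
  intros hb hb'. rewrite copair_ob_cod, (put_cp_copair p b hb) in hb'.
  rewrite copair_put_cod, (put_cp_copair p b hb). simpl.
  unfold copair_put in *. destruct p as [[b0 []] hp]; unfold copair_ob in hb; simpl in *.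
  - apply (put_comp Hu); assumption.
  - set (y := put v b0 b) in *.
    destruct (imgb m (cod y)) eqn:E.
    + assert (himg : img m (cod y)) by (apply imgb_true, E).
      rewrite (put_uv _ b' himg hb'). apply (put_comp Hv); [exact hb|].
      rewrite hb'. apply lob_uv, himg.
    + apply (put_comp Hv); assumption.
Qed.

Lemma cp_copair_lens : is_lens cp_copair.
Proof.
  apply is_lens_intro.
  - intros [[f []] hq]; [apply (get_dom Hu) | apply (get_dom Hv)].
  - intros [[f []] hq]; cbn; unfold copair_ob; simpl; [apply (get_cod Hu)|].
    rewrite (get_cod Hv). destruct (imgb m (cod f)) eqn:E; [|reflexivity].
    symmetry. apply lob_uv, imgb_true, E.
  - intros [[b []] hp]; [apply (get_id Hu) | apply (get_id Hv)].
  - apply copair_mor_comp.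
  - intros p c h. simpl. unfold copair_mor.
    rewrite put_cp_copair by exact h. simpl in h |- *. unfold copair_put, copair_ob in *.
    destruct p.2; [apply (get_put Hu) | apply (get_put Hv)]; exact h.
  - intros p. apply sig_eq. rewrite put_cp_copair by apply dom_idm.
    unfold copair_put, copair_ob. destruct p as [[b []] hp]; simpl;
      [rewrite (put_id Hu) | rewrite (put_id Hv)]; reflexivity.
  - intros p b b' hb hb'.
    assert (e : cod (put cp_copair p b) = dom (put cp_copair (cod (put cp_copair p b)) b'))
      by (symmetry; exact (put_dom cp_copair _ b' hb')).
    assert (hc : dom (comp b' b) = copair_ob p)
      by (rewrite dom_comp; [exact hb | rewrite hb'; apply cod_copair_put, hb]).
    apply sig_eq. change (comp ?x ?y) with (cp_comp m x y) at 2.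
    rewrite (cp_comp_eq m _ _ e), (put_cp_copair p _ hc), (put_cp_copair _ b' hb').
    rewrite (put_cp_copair p b hb). simpl. f_equal. apply copair_put_comp; assumption.
Qed.

Lemma cp_copair_inl : lcomp cp_copair (cp_inl m Hm) = u.
Proof.
  apply lens_eq; try reflexivity.
  intros b c h. rewrite (put_lcomp cp_copair (cp_inl m Hm) b c h).
  rewrite put_cp_inl by exact (put_dom cp_copair _ c h).
  rewrite (put_cp_copair _ c h). reflexivity.
Qed.

Lemma cp_copair_inr : lcomp cp_copair (cp_inr m Hm) = v.
Proof.
  apply lens_eq.
  - intros b. simpl. unfold copair_ob. simpl.
    destruct (imgb m b) eqn:E; [apply lob_uv, imgb_true, E | reflexivity].
  - intros f. simpl. unfold copair_mor. simpl.
    destruct (imgb m (dom f)) eqn:E; [apply lmor_uv, imgb_true, E | reflexivity].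
  - intros b c h. rewrite (put_lcomp cp_copair (cp_inr m Hm) b c h).
    rewrite put_cp_inr by exact (put_dom cp_copair _ c h).
    rewrite (put_cp_copair _ c h). simpl in h |- *. unfold copair_put, copair_ob in *. simpl in *.
    destruct (imgb m b) eqn:E; [apply put_uv, h; apply imgb_true, E | reflexivity].
Qed.

End Copair.

Lemma cokernel_pair_pushout {A B : Cat} (m : LensData A B) (Hm : is_lens m) :
  IsPushout m m (cp_inl m Hm) (cp_inr m Hm).
Proof.
  split; [apply cp_inl_lens|]. split; [apply cp_inr_lens|]. split; [apply cp_square|].
  intros Q u v Hu Hv Huv. exists (cp_copair m u v Hm). split.
  - split; [apply cp_copair_lens; assumption|].
    split; [apply cp_copair_inl | apply cp_copair_inr, Huv].
  - intros k (_ & Hku & Hkv). apply cp_lens_ext.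
    + rewrite Hku. apply cp_copair_inl.
    + rewrite Hkv. apply cp_copair_inr, Huv.
Qed.

(** * Monic lenses are effective *)

Section Factorisation.
Context {A B X : Cat} (m : LensData A B) (h : LensData X B).
Hypotheses (Hm : is_lens m) (Mm : Mono m) (Hh : is_lens h).
Hypothesis Eh : lcomp (cp_inl m Hm) h = lcomp (cp_inr m Hm) h.

Lemma img_lob_h x : img m (lob h x).
Proof.
  apply imgb_true. symmetry.
  exact (f_equal (fun p => snd (proj1_sig p)) (proj1 (lens_eq_inv _ _ Eh) x)).
Qed.

Definition fac_ob (x : Ob X) : Ob A :=
  proj1_sig (constructive_indefinite_description _ (img_lob_h x)).

Lemma lob_fac_ob x : lob m (fac_ob x) = lob h x.
Proof. exact (proj2_sig (constructive_indefinite_description _ (img_lob_h x))). Qed.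

Definition fac_mor (f : Mor X) : Mor A := put m (fac_ob (dom f)) (lmor h f).

Lemma fac_lift_dom x (c : MorFrom A (fac_ob x)) : dom (put h x (lmor m (proj1_sig c))) = x.
Proof. apply put_dom. rewrite (get_dom Hm), (proj2_sig c). apply lob_fac_ob. Qed.

Definition factor : LensData X A :=
  {| lob := fac_ob; lmor := fac_mor;
     lput := fun x c => exist _ _ (fac_lift_dom x c) |}.

Lemma put_factor x c : dom c = fac_ob x -> put factor x c = put h x (lmor m c).
Proof. intros hc. rewrite (put_eq factor x c hc). reflexivity. Qed.

Lemma dom_lmor_h f : dom (lmor h f) = lob m (fac_ob (dom f)).
Proof. rewrite (get_dom Hh), lob_fac_ob. reflexivity. Qed.

Lemma cod_fac_mor f : cod (fac_mor f) = fac_ob (cod f).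
Proof.
  apply (mono_lob_inj m Hm Mm). unfold fac_mor.
  rewrite <- (cod_put Hm) by apply dom_lmor_h. rewrite (get_cod Hh), lob_fac_ob. reflexivity.
Qed.

Lemma factor_lens : is_lens factor.
Proof.
  apply is_lens_intro; simpl.
  - intros f. apply put_dom, dom_lmor_h.
  - apply cod_fac_mor.
  - intros x. unfold fac_mor. rewrite (get_id Hh), dom_idm, <- lob_fac_ob. apply (put_id Hm).
  - intros f g e. unfold fac_mor. rewrite (dom_comp _ f g e), (get_comp Hh) by exact e.
    rewrite (put_comp Hm); [| apply dom_lmor_h |].
    + fold (fac_mor f). rewrite cod_fac_mor, e. reflexivity.
    + rewrite (get_dom Hh). fold (fac_mor f). rewrite cod_fac_mor, e, lob_fac_ob. reflexivity.
  - intros x c hc. rewrite put_factor by exact hc. unfold fac_mor.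
    assert (hmc : dom (lmor m c) = lob h x) by (rewrite (get_dom Hm), hc; apply lob_fac_ob).
    rewrite (put_dom h x _ hmc), (get_put Hh) by exact hmc.
    rewrite <- hc. apply (mono_put_get m Hm Mm).
  - intros x. rewrite put_factor by apply dom_idm.
    rewrite (get_id Hm), lob_fac_ob. apply (put_id Hh).
  - intros x b b' hb hb'.
    rewrite put_factor in hb' by exact hb.
    assert (hmb : dom (lmor m b) = lob h x) by (rewrite (get_dom Hm), hb; apply lob_fac_ob).
    assert (hbb' : cod b = dom b').
    { rewrite hb'. apply (mono_lob_inj m Hm Mm).
      rewrite <- (get_cod Hm), lob_fac_ob. apply (cod_put Hh), hmb. }
    assert (hc : dom (comp b' b) = fac_ob x) by (rewrite dom_comp; [exact hb | exact hbb']).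
    rewrite (put_factor x _ hc), (put_factor x b hb), (put_factor _ b' hb').
    rewrite (get_comp Hm) by exact hbb'.
    apply (put_comp Hh); [exact hmb |]. rewrite (get_dom Hm), hb'. apply lob_fac_ob.
Qed.

Lemma factor_spec : lcomp m factor = h.
Proof.
  apply lens_eq.
  - apply lob_fac_ob.
  - intros f. apply (get_put Hm), dom_lmor_h.
  - intros x c hc. rewrite (put_lcomp m factor x c hc), put_factor by (apply put_dom, hc).
    rewrite (get_put Hm) by exact hc. reflexivity.
Qed.

End Factorisation.

Lemma mono_effective {A B : Cat} (m : LensData A B) : is_lens m -> Mono m -> EffectiveMono m.
Proof.
  intros Hm Mm. exists (cokernel_pair m Hm), (cp_inl m Hm), (cp_inr m Hm).
  split; [apply cokernel_pair_pushout|].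
  split; [exact Hm|]. split; [apply cp_square|].
  intros X h Hh Eh. exists (factor m h Hm Eh). split.
  - split; [apply factor_lens | apply factor_spec]; assumption.
  - intros k [Hk Ek]. apply Mm; [apply factor_lens; assumption | exact Hk |].
    rewrite factor_spec, Ek by assumption. reflexivity.
Qed.

Theorem corollary5p8 :
  forall (A B : Cat) (m : LensData A B), is_lens m ->
    (Mono m <-> EffectiveMono m) /\
    (Mono m <-> RegularMono m) /\
    (Mono m <-> StrongMono m) /\
    (Mono m <-> ExtremalMono m).
Proof.
  intros A B m Hm.
  assert (ME : Mono m -> EffectiveMono m) by apply mono_effective, Hm.
  assert (ER := effective_regular m).
  assert (RS := regular_strong m).
  assert (SX := strong_extremal m).
  assert (XM : ExtremalMono m -> Mono m) by apply proj1.
  split; [|split; [|split]]; split; tauto.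
Qed.
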